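(* Let $M$ be an Orlicz function satisfying the $\Delta_2^\infty$-condition, and let $\phi_U(n):=\|\sum_{k=1}^ne_k\|_{(L_M)_U}$, $n\in\mathbb N$, where $e_k$ are the canonical unit vectors. Then $\phi_U(n)\asymp\Phi_{M^{-1}}(n)$, $n\in\mathbb N$, with constants independent of $n$, where $M^{-1}$ is the inverse function of $M$.
   Context: An Orlicz function is an increasing convex continuous $M:[0,\infty)\to[0,\infty)$ with $M(0)=0$, $M(t)\to\infty$, normalized by $M(1)=1$ (assumed strictly increasing so $M^{-1}$ exists); $M\in\Delta_2^\infty$ means $\sup_{u\ge1}M(2u)/M(u)<\infty$. $L_M=L_M[0,1]$ (Lebesgue measure) has the Luxemburg norm $\|f\|_{L_M}:=\inf\{\lambda>0:\int_0^1M(|f|/\lambda)\le1\}$. For a Banach lattice $X$, $\mathfrak B_n(X)$ is the set of $n$-tuples of pairwise disjoint norm-one elements; $\|a\|_{X_U(n)}:=\sup\{\|\sum_{i=1}^na_ix_i\|_X:(x_i)\in\mathfrak B_n(X)\}$, and $X_U$ is the space of real sequences with $\|a\|_{X_U}:=\sup_n\|(a_i)_{i=1}^n\|_{X_U(n)}<\infty$. For $g:(0,\infty)\to(0,\infty)$, $\Phi_g(u):=\sup_{v\ge\max(1,1/u)}g(vu)/g(v)$, $u>0$. $F\asymp G$ means $c^{-1}G\le F\le cG$ for a constant $c$. *)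

From HB Require Import structures.
From mathcomp Require Import all_boot all_order all_algebra.
From mathcomp Require Import all_classical all_reals all_analysis.
Set Implicit Arguments. Unset Strict Implicit. Unset Printing Implicit Defensive.
Import Order.TTheory GRing.Theory Num.Theory.
Import numFieldNormedType.Exports.
Local Open Scope classical_set_scope.
Local Open Scope ring_scope.

Section Orlicz.
Variable R : realType.

Definition orlicz_function (M : R -> R) : Prop :=
  [/\ (forall x y, 0 <= x -> x < y -> M x < M y),
      ((forall x y t, 0 <= x -> 0 <= y -> 0 <= t <= 1 ->
         M (t * x + (1 - t) * y) <= t * M x + (1 - t) * M y) /\
      {within `[0, +oo[, continuous M}),
      M 0 = 0,
      M x @[x --> +oo] --> +oo
    & M 1 = 1].

Definition Delta2_infty (M : R -> R) : Prop :=
  exists C : R, forall u, 1 <= u -> M (2 * u) <= C * M u.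

Definition is_inverse_on_nonneg (M Minv : R -> R) : Prop :=
  forall t, 0 <= t -> [/\ 0 <= Minv t, Minv (M t) = t & M (Minv t) = t].

Definition mu := (@lebesgue_measure R).

Definition modular_le1 (M : R -> R) (f : R -> R) (l : R) : Prop :=
  (\int[mu]_(x in (`[0%R, 1%R] : set R)) (M (`|f x| / l))%:E <= 1)%E.

(* f is (a representative of) an element of L_M[0,1] *)
Definition in_LM (M : R -> R) (f : R -> R) : Prop :=
  measurable_fun (`[0%R, 1%R] : set R) f /\ exists l, 0 < l /\ modular_le1 M f l.

Definition lux_norm (M : R -> R) (f : R -> R) : R :=
  inf [set l : R | 0 < l /\ modular_le1 M f l].

Definition disjoint_normalized (M : R -> R) (n : nat) (xs : 'I_n -> R -> R)
  : Prop :=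
  (forall i, in_LM M (xs i) /\ lux_norm M (xs i) = 1) /\
  (forall i j : 'I_n, i != j ->
     mu.-negligible [set x : R | (0 <= x <= 1) /\ xs i x != 0 /\ xs j x != 0]).

(* ||(a_i)_{i<n}||_{X_U(n)} for X = L_M  (indices shifted to 0..n-1) *)
Definition XU_n_norm (M : R -> R) (n : nat) (a : nat -> R) : \bar R :=
  ereal_sup [set (lux_norm M (fun x => \sum_(i < n) a i * xs i x))%:E
            | xs in [set xs | disjoint_normalized M xs]].

Definition XU_norm (M : R -> R) (a : nat -> R) : \bar R :=
  ereal_sup (range (fun m => XU_n_norm M m a)).

Definition phi_U (M : R -> R) (n : nat) : \bar R :=
  XU_norm M (fun i => if (i < n)%N then 1 else 0).

Definition Phi (g : R -> R) (u : R) : \bar R :=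
  ereal_sup [set (g (v * u) / g v)%:E | v in [set v | Num.max 1 u^-1 <= v]].

End Orlicz.

From HB Require Import structures.
From mathcomp Require Import all_boot all_order all_algebra.
From mathcomp Require Import all_classical all_reals all_analysis.
From mathcomp Require Import ring lra zify measurable_realfun.
Import Order.TTheory GRing.Theory Num.Theory.
Import numFieldNormedType.Exports.
Local Open Scope classical_set_scope.
Local Open Scope ring_scope.
Set Implicit Arguments. Unset Strict Implicit. Unset Printing Implicit Defensive.

(* The constant 4 works for every Orlicz function.  Lower bound: for v >= 1, the n steps of height M^-1(vn) on
   consecutive intervals of length 1/(vn) are disjoint of norm one, and their
   sum, a step of the same height on [0, 1/v), has norm M^-1(vn)/M^-1(v).
   Upper bound: if M^-1(wn)/M^-1(w) <= r for all w >= 1, then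
   M(u/r) <= max(M(u)/n, 1), hence by convexity
   M(t/(4r)) <= (M(t/2)/n + 1)/2; since a norm-one x satisfies
   int M(|x|/2) <= 1, integrating this bound over a sum of at most n disjoint
   norm-one functions gives modular at most 1 at level 4r. *)

Section OrliczFunction.
Variables (R : realType) (M : R -> R).
Hypothesis oM : orlicz_function M.

Lemma orlicz0 : M 0 = 0. Proof. by case: oM. Qed.

Lemma orlicz1 : M 1 = 1. Proof. by case: oM. Qed.

Lemma orlicz_le x y : 0 <= x -> x <= y -> M x <= M y.
Proof.
case: oM => inc _ _ _ _ x0; rewrite le_eqVlt => /orP[/eqP->//|xy].
exact/ltW/inc.
Qed.

Lemma orlicz_ge0 x : 0 <= x -> 0 <= M x.
Proof. by move=> x0; rewrite -orlicz0 orlicz_le. Qed.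

Lemma orlicz_half y : 0 <= y -> M (y / 2) <= M y / 2.
Proof.
case: oM => _ [cvx _] _ _ _ y0.
have := cvx y 0 (2^-1) y0 (lexx 0).
rewrite invr_ge0 ler0n /= invf_le1 ?ler1n // => /(_ isT).
by rewrite !mulr0 !addr0 orlicz0 mulr0 addr0 mulrC [M y * _]mulrC.
Qed.

Lemma measurable_orlicz_norm (D : set R) (h : R -> R) (l : R) :
  0 <= l -> measurable D -> measurable_fun D h ->
  measurable_fun D (fun x => (M (`|h x| / l))%:E).
Proof.
move=> l0 mD mh; apply/measurable_EFinP.
pose g y := M (Num.max y 0).
have g_nd : nondecreasing_fun g.
  move=> x y xy; apply: orlicz_le; first by rewrite le_max lexx orbT.
  by rewrite ge_max !le_max xy lexx /= orbT.
have -> : (fun x => M (`|h x| / l)) = g \o (fun x => `|h x| / l).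
  by apply/funext => x /=; rewrite /g max_l // divr_ge0.
apply: measurableT_comp; first exact: nondecreasing_measurable.
by apply: measurable_funM; [exact: measurableT_comp|exact: measurable_cst].
Qed.

Lemma modular_le1_le (f : R -> R) (l l' : R) :
  measurable_fun (`[0%R, 1%R] : set R) f -> 0 < l -> l <= l' ->
  modular_le1 M f l -> modular_le1 M f l'.
Proof.
move=> mf l0 ll'; apply: le_trans.
have l'0 : 0 < l' by apply: lt_le_trans ll'.
apply: ge0_le_integral => //.
- by move=> x _; rewrite lee_fin orlicz_ge0 // divr_ge0 // ltW.
- by apply: measurable_orlicz_norm => //; exact: ltW.
- by apply: measurable_orlicz_norm => //; exact: ltW.
- move=> x _; rewrite lee_fin; apply: orlicz_le; first by rewrite divr_ge0 // ltW.
  by apply: ler_wpM2l => //; rewrite lef_pV2.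
Qed.

Lemma modular_le1_2_lux_norm1 (f : R -> R) :
  in_LM M f -> lux_norm M f = 1 -> modular_le1 M f 2.
Proof.
move=> [mf [l [l0 hl]]] f1.
have : inf [set l : R | 0 < l /\ modular_le1 M f l] < 2.
  by rewrite -/(lux_norm M f) f1 ltr1n.
case/inf_lt; first by exists l.
by move=> y [y0 hy] y2; apply: modular_le1_le hy => //; exact: ltW.
Qed.


Lemma integral_orlicz_step (a b K l : R) :
  0 <= a -> a <= b -> b <= 1 -> 0 <= K -> 0 < l ->
  (\int[@mu R]_(x in (`[0%R, 1%R] : set R)) (M (`|K * \1_(`[a, b[ : set R) x| / l))%:E
   = (M (K / l) * (b - a))%:E)%E.
Proof.
move=> a0 ab b1 K0 l0.
have mD : measurable (`[0%R, 1%R] : set R) by exact: measurable_itv.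
have mA : measurable (`[a, b[ : set R) by exact: measurable_itv.
transitivity (\int[@lebesgue_measure R]_(x in (`[0%R, 1%R] : set R))
   ((M (K / l))%:E * (\1_(`[a, b[ : set R) x)%:E))%E.
  apply: eq_integral => x _; rewrite -EFinM; congr EFin; rewrite indicE.
  case: (x \in _) => /=; first by rewrite !mulr1 ger0_norm.
  by rewrite !mulr0 normr0 mul0r orlicz0.
rewrite ge0_integralZl_EFin //; first last.
- by rewrite orlicz_ge0 // divr_ge0 // ltW.
- by apply/measurable_EFinP; exact: measurable_indic.
rewrite integral_indic // setIidl; last first.
  move=> x /=; rewrite !in_itv /= => /andP[ax xb].
  by rewrite (le_trans a0 ax) (ltW (lt_le_trans xb b1)).
rewrite [X in (_ * X)%E = _](@lebesgue_measure_itv R `[a, b[) /= lte_fin.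
case: ltP => [_|ba]; first by rewrite -EFinD -EFinM.
have -> : b = a by apply: le_anti; rewrite ab ba.
by rewrite mule0 subrr mulr0.
Qed.

Lemma modular_le1_step (a b K l : R) :
  0 <= a -> a <= b -> b <= 1 -> 0 <= K -> 0 < l ->
  modular_le1 M (fun x => K * \1_(`[a, b[ : set R) x) l <-> M (K / l) * (b - a) <= 1.
Proof. by move=> *; rewrite /modular_le1 integral_orlicz_step // lee_fin. Qed.

End OrliczFunction.

Section OrliczInverse.
Variables (R : realType) (M Minv : R -> R).
Hypotheses (oM : orlicz_function M) (iM : is_inverse_on_nonneg M Minv).

Lemma orlicz_invK t : 0 <= t -> M (Minv t) = t.
Proof. by case/iM. Qed.

Lemma orliczK t : 0 <= t -> Minv (M t) = t.
Proof. by case/iM. Qed.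

Lemma le_orlicz_inv x t : 0 <= x -> 0 <= t -> M x <= t -> x <= Minv t.
Proof.
move=> x0 t0 Mxt; rewrite leNgt; apply/negP => tx.
have [Mi0 _ MMi] := iM t0.
have := (let: And5 inc _ _ _ _ := oM in inc) _ _ Mi0 tx.
by rewrite MMi ltNge Mxt.
Qed.

Lemma orlicz_inv_gt0 t : 0 < t -> 0 < Minv t.
Proof.
move=> t0; have [Mi0 _ MMi] := iM (ltW t0).
rewrite lt_def Mi0 andbT; apply: contraTneq t0 => Mi_eq0.
by rewrite -MMi Mi_eq0 (orlicz0 oM) ltxx.
Qed.

Lemma orlicz_inv1 : Minv 1 = 1.
Proof. by have [_ + _] := iM ler01; rewrite (orlicz1 oM). Qed.

Section Step.
Variables (a b K : R).
Hypotheses (a0 : 0 <= a) (ab : a < b) (b1 : b <= 1) (K0 : 0 < K).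

Let w := (b - a)^-1.
Let w0 : 0 < w. Proof. by rewrite invr_gt0 subr_gt0. Qed.
Let step x := K * \1_(`[a, b[ : set R) x.

Lemma modular_le1_stepE l : 0 < l -> modular_le1 M step l <-> K / Minv w <= l.
Proof.
move=> l0; have Kl0 : 0 <= K / l by rewrite divr_ge0 ?ltW.
have Mw0 := orlicz_inv_gt0 w0.
have -> : K / Minv w <= l <-> K / l <= Minv w.
  by rewrite ler_pdivrMr // mulrC -ler_pdivrMr.
rewrite modular_le1_step ?(ltW ab) ?(ltW K0) // -ler_pdivlMr ?subr_gt0 // mul1r.
split => [|hl]; first exact: le_orlicz_inv (ltW w0).
by rewrite -[X in _ <= X](orlicz_invK (ltW w0)) orlicz_le.
Qed.

Lemma lux_norm_step : lux_norm M step = K / Minv w.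
Proof.
have Kw0 : 0 < K / Minv w by rewrite divr_gt0 ?orlicz_inv_gt0.
have adm : 0 < K / Minv w /\ modular_le1 M step (K / Minv w).
  by split; last exact/modular_le1_stepE.
apply: le_anti; apply/andP; split.
  by apply: ge_inf adm; exists 0 => y [y0 _]; exact: ltW.
by apply: lb_le_inf; [exists (K / Minv w)| move=> l [l0 /modular_le1_stepE]; apply].
Qed.

Lemma in_LM_step : in_LM M step.
Proof.
split; first by apply: measurable_funM; [exact: measurable_cst|exact: measurable_indic].
have Kw0 : 0 < K / Minv w by rewrite divr_gt0 ?orlicz_inv_gt0.
by exists (K / Minv w); split => //; apply/modular_le1_stepE.
Qed.

End Step.
End OrliczInverse.

Section Steps.
Variables (R : realType) (M Minv : R -> R).
Hypotheses (oM : orlicz_function M) (iM : is_inverse_on_nonneg M Minv).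

Definition steps (n : nat) (s C : R) : 'I_n -> R -> R :=
  fun i x => C * \1_(`[i%:R * s, i.+1%:R * s[ : set R) x.
Arguments steps : clear implicits.

Lemma sum_indic_consecutive_itv (s x : R) (k : nat) : 0 <= s ->
  \sum_(i < k) (\1_(`[i%:R * s, i.+1%:R * s[ : set R) x : R) =
  \1_(`[0, k%:R * s[ : set R) x.
Proof.
move=> s0; elim: k => [|k IH].
  rewrite big_ord0 indicE mem_setE in_itv /= mul0r.
  by case: (lerP 0 x) => h //=; rewrite ltNge h.
rewrite big_ord_recr /= IH !indicE !mem_setE !in_itv /=.
have hk : k%:R * s <= k.+1%:R * s by rewrite ler_wpM2r // ler_nat.
have k0 : 0 <= k%:R * s by rewrite mulr_ge0.
have [h1|h1] := lerP 0 x; have [h2|h2] := ltrP x (k%:R * s);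
  have [h3|h3] := ltrP x (k.+1%:R * s) => /=; rewrite ?addr0 ?add0r //; lra.
Qed.

Variables (n : nat) (s : R).
Hypotheses (s0 : 0 < s) (ns1 : n%:R * s <= 1).

Let step_itv (i : 'I_n) : [/\ 0 <= i%:R * s, i%:R * s < i.+1%:R * s & i.+1%:R * s <= 1].
Proof.
split; first by rewrite mulr_ge0 // ltW.
  by rewrite ltr_pM2r // ltr_nat.
apply: le_trans ns1; apply: ler_wpM2r; [exact: ltW|rewrite ler_nat; exact: ltn_ord].
Qed.

Lemma disjoint_normalized_steps : disjoint_normalized M (steps n s (Minv s^-1)).
Proof.
have C0 : 0 < Minv s^-1 by rewrite (orlicz_inv_gt0 oM iM) ?invr_gt0.
split=> [i|i j ij].
  have [a0 ab b1] := step_itv i.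
  split; first exact: (in_LM_step oM iM).
  rewrite /steps (lux_norm_step oM iM) //.
  have -> : i.+1%:R * s - i%:R * s = s by rewrite -natr1; ring.
  by rewrite divff ?gt_eqF.
exists set0; split => // x [_ [hi hj]].
have inA (k : 'I_n) : steps n s (Minv s^-1) k x != 0 -> k%:R * s <= x < k.+1%:R * s.
  by rewrite /steps indicE mem_setE in_itv /=; case: (_ && _) => //; rewrite mulr0 eqxx.
move: (inA _ hi) (inA _ hj) => /andP[hi1 hi2] /andP[hj1 hj2].
have [lt_ij|lt_ji|eq_ij] := ltngtP i j; last by rewrite (val_inj eq_ij) eqxx in ij.
- have : i.+1%:R * s <= j%:R * s by apply: ler_wpM2r; [exact: ltW|rewrite ler_nat].
  lra.
- have : j.+1%:R * s <= i%:R * s by apply: ler_wpM2r; [exact: ltW|rewrite ler_nat].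
  lra.
Qed.

Lemma lux_norm_sum_steps C : (0 < n)%N -> 0 < C ->
  lux_norm M (fun x => \sum_(i < n) steps n s C i x) = C / Minv (n%:R * s)^-1.
Proof.
move=> n0 C0.
have -> : (fun x => \sum_(i < n) steps n s C i x) =
    (fun x => C * \1_(`[0, n%:R * s[ : set R) x).
  by apply/funext => x; rewrite -mulr_sumr sum_indic_consecutive_itv // ltW.
by rewrite (lux_norm_step oM iM) ?subr0 // mulr_gt0 ?ltr0n.
Qed.

End Steps.

Lemma lux_norm_le_phi_U (R : realType) (M : R -> R) (n : nat) (xs : 'I_n -> R -> R) :
  disjoint_normalized M xs ->
  ((lux_norm M (fun x => \sum_(i < n) xs i x))%:E <= phi_U M n)%E.
Proof.
move=> dxs; apply: le_ereal_sup_tmp.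
exists (XU_n_norm M n (fun i => if (i < n)%N then 1 else 0)); first by exists n.
apply: le_ereal_sup_tmp; exists (lux_norm M (fun x =>
  \sum_(i < n) (if (i < n)%N then 1 else 0) * xs i x))%:E; first by exists xs.
suff -> : (fun x => \sum_(i < n) (if (i < n)%N then 1 else 0) * xs i x) =
    (fun x => \sum_(i < n) xs i x) by [].
by apply/funext => x; apply: eq_bigr => i _; rewrite ltn_ord mul1r.
Qed.

Lemma orlicz_inv_ratio_le_phi_U (R : realType) (M Minv : R -> R) (n : nat) (v : R) :
  orlicz_function M -> is_inverse_on_nonneg M Minv -> (0 < n)%N -> 1 <= v ->
  ((Minv (v * n%:R) / Minv v)%:E <= phi_U M n)%E.
Proof.
move=> oM iM n0 v1.
have v0 : 0 < v := lt_le_trans ltr01 v1.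
set s := (v * n%:R)^-1.
have s0 : 0 < s by rewrite invr_gt0 mulr_gt0 ?ltr0n.
have ns : n%:R * s = v^-1 by rewrite /s invfM mulrCA mulfV ?mulr1 // pnatr_eq0 -lt0n.
have ns1 : n%:R * s <= 1 by rewrite ns invf_le1.
have C0 : 0 < Minv s^-1 by apply: (orlicz_inv_gt0 oM iM); rewrite invr_gt0.
have := lux_norm_le_phi_U (disjoint_normalized_steps oM iM s0 ns1).
by rewrite (lux_norm_sum_steps oM iM) // ns !invrK.
Qed.

Section DilationBound.
Variables (R : realType) (M Minv : R -> R) (N r : R).
Hypotheses (oM : orlicz_function M) (iM : is_inverse_on_nonneg M Minv).
Hypotheses (N0 : 0 < N) (r0 : 0 < r).
Hypothesis Minv_ratio_le : forall w, 1 <= w -> Minv (w * N) / Minv w <= r.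

Lemma orlicz_div_le_max u : 0 <= u -> M (u / r) <= Num.max (M u / N) 1.
Proof.
move=> u0; have ur0 : 0 <= u / r by rewrite divr_ge0 // ltW.
have Mu0 := orlicz_ge0 oM u0.
rewrite le_max; have [Nu|uN] := lerP N (M u); apply/orP; [left|right].
- set w := M u / N; have w1 : 1 <= w by rewrite ler_pdivlMr // mul1r.
  have w0 : 0 < w := lt_le_trans ltr01 w1.
  have := Minv_ratio_le w1; rewrite /w mulfVK ?gt_eqF // (orliczK iM u0).
  rewrite ler_pdivrMr ?(orlicz_inv_gt0 oM iM) // mulrC -ler_pdivrMr // => uw.
  by rewrite -[w in _ <= w](orlicz_invK iM (ltW w0)) orlicz_le.
- have u_le : u <= Minv N by apply: (le_orlicz_inv oM iM) => //; rewrite ltW.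
  have := Minv_ratio_le (lexx 1); rewrite mul1r (orlicz_inv1 oM iM) divr1 => Nr.
  have ur1 : u / r <= 1 by rewrite ler_pdivrMr // mul1r (le_trans u_le Nr).
  by have := orlicz_le oM ur0 ur1; rewrite (orlicz1 oM).
Qed.

Lemma orlicz_dilation_le t : 0 <= t -> M (t / (4 * r)) <= (M (t / 2) / N + 1) / 2.
Proof.
move=> t0; have u0 : 0 <= t / 2 by rewrite divr_ge0.
have -> : t / (4 * r) = t / 2 / r / 2.
  by rewrite -!mulrA; congr (_ * _); rewrite -!invfM; congr (_^-1); ring.
apply: le_trans (orlicz_half oM _) _; first by rewrite divr_ge0 // ltW.
rewrite ler_pM2r ?invr_gt0 ?ltr0n //.
apply: le_trans (orlicz_div_le_max u0) _.
by rewrite ge_max lerDl lerDr ler01 /= divr_ge0 ?(orlicz_ge0 oM) // ltW.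
Qed.

End DilationBound.

Lemma ler_fun_sum_disjoint (R : realType) (I : finType) (y c : I -> R) (phi : R -> R) :
  phi 0 = 0 -> (forall i, 0 <= c i) ->
  (forall i, y i != 0 -> phi (y i) <= c i) ->
  (forall i j, i != j -> y i != 0 -> y j = 0) ->
  phi (\sum_i y i) <= \sum_i c i.
Proof.
move=> phi0 c0 hc hd.
have [[k yk]|all0] := pselect (exists k, y k != 0).
- rewrite (bigD1 k) //= big1 ?addr0 => [|i ik]; last by apply: hd yk; rewrite eq_sym.
  by apply: le_trans (hc k yk) _; rewrite (bigD1 k) //= lerDl sumr_ge0.
- rewrite big1 ?phi0 ?sumr_ge0 // => i _.
  by apply: contrapT => yi; apply: all0; exists i; apply/eqP.
Qed.

Lemma ae_orlicz_sum_disjoint (R : realType) (M : R -> R) (m : nat)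
    (xs : 'I_m -> R -> R) (a : 'I_m -> R) (l : R) :
  orlicz_function M -> disjoint_normalized M xs -> (forall i, a i = 0 \/ a i = 1) ->
  0 <= l -> {ae @mu R, forall x, 0 <= x <= 1 ->
    M (`|\sum_i a i * xs i x| / l) <= \sum_i a i * M (`|xs i x| / l)}.
Proof.
move=> oM [_ dxs] a01 l0.
have : \forall x \near almost_everywhere (@mu R), forall ij : 'I_m * 'I_m,
    ij.1 != ij.2 -> ~ (0 <= x <= 1 /\ xs ij.1 x != 0 /\ xs ij.2 x != 0).
  apply: filter_forall => -[i j] /=.
  have [->|ij] := eqVneq i j; first by apply: nearW.
  case: (dxs i j ij) => N [mN N0 sub]; exists N; split => // x /= hx.
  by apply: sub; apply: contrapT => nA; apply: hx.
have ae_filter : Filter (almost_everywhere (@mu R)) := ae_filter_ringOfSetsType _.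
apply: filterS => x hx x01.
apply: (ler_fun_sum_disjoint (phi := fun t => M (`|t| / l))).
- by rewrite normr0 mul0r (orlicz0 oM).
- by move=> i; case: (a01 i) => ->; rewrite ?mul0r // mul1r (orlicz_ge0 oM) ?divr_ge0.
- by move=> i; case: (a01 i) => ->; rewrite ?mul0r ?eqxx // !mul1r.
- move=> i j ij; have [->|xi0] := eqVneq (xs i x) 0; first by rewrite mulr0 eqxx.
  have [->|xj0] := eqVneq (xs j x) 0; first by rewrite mulr0.
  by exfalso; apply: (hx (i, j)).
Qed.

Section DisjointSum.
Variables (R : realType) (M : R -> R) (m : nat) (xs : 'I_m -> R -> R) (a : 'I_m -> R).
Hypotheses (oM : orlicz_function M) (dxs : disjoint_normalized M xs).
Hypothesis a01 : forall i, a i = 0 \/ a i = 1.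

Let D := (`[0%R, 1%R] : set R).
Let mD : measurable D. Proof. exact: measurable_itv. Qed.
Let a_ge0 i : 0 <= a i. Proof. by case: (a01 i) => ->. Qed.

Let term_ge0 i x : (0 <= (a i * M (`|xs i x| / 2))%:E)%E.
Proof. by rewrite lee_fin mulr_ge0 // (orlicz_ge0 oM) // divr_ge0. Qed.

Let measurable_term i : measurable_fun D (fun x => (a i * M (`|xs i x| / 2))%:E).
Proof.
apply/measurable_EFinP/measurable_funM; first exact: measurable_cst.
by apply/measurable_EFinP; apply: (measurable_orlicz_norm oM) => //; exact: (dxs.1 i).1.1.
Qed.

Lemma integral_orlicz_sum_le :
  (\int[@mu R]_(x in D) (\sum_i (a i * M (`|xs i x| / 2))%:E) <= (\sum_i a i)%:E)%E.
Proof.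
rewrite ge0_integral_sum // -sumEFin; apply: lee_sum => i _.
have [->|->] := a01 i.
  by under eq_integral do rewrite mul0r; rewrite integral0.
under eq_integral do rewrite mul1r.
by have := modular_le1_2_lux_norm1 oM (dxs.1 i).1 (dxs.1 i).2.
Qed.


Lemma lux_norm_disjoint_sum_le (Minv : R -> R) (N r : R) :
  is_inverse_on_nonneg M Minv -> 0 < N -> 0 < r ->
  (forall w, 1 <= w -> Minv (w * N) / Minv w <= r) -> \sum_i a i <= N ->
  lux_norm M (fun x => \sum_i a i * xs i x) <= 4 * r.
Proof.
move=> iM N0 r0 hr sum_a.
set f := fun x => \sum_i a i * xs i x.
have r4 : 0 < 4 * r by rewrite mulr_gt0.
have mf : measurable_fun D f.
  apply: measurable_sum => i; apply: measurable_funM; first exact: measurable_cst.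
  exact: (dxs.1 i).1.1.
suff f_mod : modular_le1 M f (4 * r).
  by apply: ge_inf (conj r4 f_mod); exists 0 => y [y0 _]; exact: ltW.
set g := fun x => (\sum_i (a i * M (`|xs i x| / 2))%:E)%E.
have g0 x : (0 <= g x)%E by exact: sume_ge0.
have mg : measurable_fun D g by exact: emeasurable_sum.
have k0 : 0 <= (2 * N)^-1 by rewrite invr_ge0 mulr_ge0 // ltW.
apply: (@le_trans _ _ (\int[@mu R]_(x in D) (((2 * N)^-1)%:E * g x + (2^-1)%:E))%E).
  apply: ae_ge0_le_integral => //.
  - by move=> x _; rewrite lee_fin (orlicz_ge0 oM) // divr_ge0 // ltW.
  - exact: (measurable_orlicz_norm oM) (ltW r4) mD mf.
  - by move=> x _; rewrite adde_ge0 ?mule_ge0 // lee_fin.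
  - by apply: emeasurable_funD; [exact: measurable_funeM|exact: measurable_cst].
  have ae_filter : Filter (almost_everywhere (@mu R)) := ae_filter_ringOfSetsType _.
  apply: filterS (ae_orlicz_sum_disjoint oM dxs a01 (ler0n _ 2)) => x hx Dx.
  have {}hx := hx Dx; rewrite /g sumEFin -EFinM -EFinD lee_fin.
  apply: le_trans (orlicz_dilation_le oM iM N0 r0 hr (normr_ge0 (f x))) _.
  have -> : (M (`|f x| / 2) / N + 1) / 2 = (2 * N)^-1 * M (`|f x| / 2) + 2^-1.
    by field; rewrite gt_eqF.
  by rewrite lerD2r ler_wpM2l.
rewrite ge0_integralD //; last 2 first.
- by move=> x _; rewrite mule_ge0 // lee_fin.
- exact: measurable_funeM.
have D1 : @lebesgue_measure R D = 1%E by rewrite lebesgue_measure_itv /= lte01 oppr0 adde0.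
rewrite ge0_integralZl_EFin // integral_cst // [X in (_ + _ * X <= _)%E]D1 mule1.
apply: le_trans (leeD2r _ (lee_wpmul2l _ integral_orlicz_sum_le)) _; first by rewrite lee_fin.
rewrite -EFinM -EFinD lee_fin.
have : (2 * N)^-1 * \sum_i a i <= (2 * N)^-1 * N by rewrite ler_wpM2l.
have -> : (2 * N)^-1 * N = 2^-1 by field; rewrite gt_eqF.
lra.
Qed.

End DisjointSum.

Lemma sum_ltn_indicator (R : realType) (m n : nat) :
  \sum_(i < m) ((if (i < n)%N then 1 else 0) : R) = (minn m n)%:R.
Proof.
elim: m => [|m IH]; first by rewrite big_ord0 min0n.
rewrite big_ord_recr /= IH; case: ltnP => h.
- by rewrite natr1; congr (_%:R); lia.
- by rewrite addr0; congr (_%:R); lia.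
Qed.

Lemma le_Phi (R : realType) (g : R -> R) (u v : R) :
  1 <= u -> 1 <= v -> ((g (v * u) / g v)%:E <= Phi g u)%E.
Proof.
move=> u1 v1; apply: ereal_sup_ubound; exists v => //=.
by rewrite ge_max v1 (le_trans _ v1) // invf_le1 // (lt_le_trans ltr01).
Qed.

Section PhiBounds.
Variables (R : realType) (M Minv : R -> R) (n : nat).
Hypotheses (oM : orlicz_function M) (iM : is_inverse_on_nonneg M Minv) (n1 : (1 <= n)%N).

Let n_ge1 : 1 <= n%:R :> R. Proof. by rewrite ler1n. Qed.

Lemma Phi_orlicz_inv_gt0 : (0 < Phi Minv n%:R)%E.
Proof.
apply: lt_le_trans (le_Phi Minv n_ge1 (lexx 1)).
by rewrite mul1r (orlicz_inv1 oM iM) divr1 lte_fin (orlicz_inv_gt0 oM iM) // ltr0n.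
Qed.

Lemma Phi_le_phi_U : (Phi Minv n%:R <= phi_U M n)%E.
Proof.
apply: ge_ereal_sup => _ [v /= hv <-].
by apply: orlicz_inv_ratio_le_phi_U => //; move: hv; rewrite ge_max => /andP[].
Qed.

Lemma phi_U_le_Phi : (phi_U M n <= 4%:E * Phi Minv n%:R)%E.
Proof.
have := Phi_orlicz_inv_gt0; have := @le_Phi _ Minv n%:R.
case: (Phi Minv n%:R) => [r hr r0| |//]; last by rewrite gt0_muley ?lte_fin // leey.
rewrite lte_fin in r0; rewrite -EFinM.
apply: ge_ereal_sup => _ [m _ <-]; apply: ge_ereal_sup => _ [xs /= dxs <-].
have n0 : 0 < n%:R :> R by rewrite ltr0n.
rewrite lee_fin; apply: (lux_norm_disjoint_sum_le oM dxs _ iM n0 r0).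
- by move=> i; case: ifP; [right|left].
- by move=> w w1; rewrite -lee_fin; exact: hr.
- by rewrite sum_ltn_indicator ler_nat geq_minr.
Qed.

End PhiBounds.

Theorem mainTheorem19 (R : realType) (M Minv : R -> R) :
  orlicz_function M -> Delta2_infty M -> is_inverse_on_nonneg M Minv ->
  exists c : R, 0 < c /\
    forall n : nat, (1 <= n)%N ->
      ((c^-1)%:E * Phi Minv n%:R <= phi_U M n)%E /\
      (phi_U M n <= c%:E * Phi Minv n%:R)%E.
Proof.
move=> oM _ iM; exists 4; split => // n n1.
split; last exact: phi_U_le_Phi.
apply: le_trans (Phi_le_phi_U oM iM n1).
have := Phi_orlicz_inv_gt0 oM iM n1; case: (Phi Minv n%:R) => [r|_|//].
  by rewrite !lte_fin -EFinM lee_fin => r0; lra.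
by rewrite leey.
Qed.
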